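(* Suppose $\Delta_{\mathfrak g}$ is one of the seven irreducible locally affine root systems $X_J^{(r)}$ of infinite rank, realized as below, and let $\lambda\in i\mathfrak t_{\mathfrak g}^*$ with $\lambda_c:=\lambda(c)>0$. Write $\lambda_j:=\lambda$-coordinate at $j\in J$ (i.e. $\lambda|_{\mathfrak t}$ corresponds to $j\mapsto\lambda_j=\lambda(E_j)$). Then $\lambda$ is $d$-minimal iff: $A_J^{(1)}$: $\sup_j\lambda_j-\inf_j\lambda_j\le\lambda_c$; $B_J^{(1)}$: $|\lambda_j|+|\lambda_k|\le\lambda_c$ for $j\neq k$; $C_J^{(1)}$: $|\lambda_j|\le\lambda_c$ for all $j$; $D_J^{(1)}$: $|\lambda_j|+|\lambda_k|\le\lambda_c$ for $j\ne k$; $B_J^{(2)}$: $|\lambda_j|\le\lambda_c$ for all $j$; $C_J^{(2)}$: $|\lambda_j|+|\lambda_k|\le2\lambda_c$ for $j\ne k$; $BC_J^{(2)}$: $|\lambda_j|\le\lambda_c$ for all $j$.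
   Context: Setting: $\mathfrak k$ a simple infinite-dimensional Hilbert–Lie algebra with normalized scalar product ($(\alpha,\alpha)=2$ for long roots), $\phi$ a finite order automorphism; $\mathfrak g=\widehat{\mathcal L}_\phi(\mathfrak k)$ the double extension $\mathbb R\times\mathcal L_\phi(\mathfrak k)\times\mathbb R$ of smooth $\phi$-twisted loops with bracket $[(z_1,\xi_1,t_1),(z_2,\xi_2,t_2)]=(\langle\xi_1',\xi_2\rangle,t_1\xi_2'-t_2\xi_1'+[\xi_1,\xi_2],0)$; $c=(i,0,0)$, $d=(0,0,-i)$; $\mathfrak t\subseteq\mathfrak k^\phi$ maximal abelian, $\mathfrak t_{\mathfrak g}=\mathbb R\oplus\mathfrak t\oplus\mathbb R$; $\mathfrak t_{\mathbb C}\cong\ell^2(J,\mathbb C)$ with coordinate functionals $\varepsilon_j$ and dual elements $E_j$. The compact roots are $(\alpha,n)$ with $(\alpha,n)(z,h,t)=\alpha(h)+itn$, $\alpha\ne0$ a $\mathfrak t$-weight on the $e^{2\pi in/N}$-eigenspace of $L(\phi)^{-1}$; they form $\Delta_{\mathfrak g}$. The seven systems: $X_J^{(1)}=X_J\times\mathbb Z$ for $X\in\{A,B,C,D\}$ with $A_J=\{\varepsilon_j-\varepsilon_k\}$, $B_J=\{\pm\varepsilon_j\pm\varepsilon_k,\pm\varepsilon_j\}$, $C_J=\{\pm\varepsilon_j\pm\varepsilon_k,\pm2\varepsilon_j\}$, $D_J=\{\pm\varepsilon_j\pm\varepsilon_k\}$ ($j\ne k$); $B_J^{(2)}=(B_J\times2\mathbb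 Z)\cup(\{\pm\varepsilon_j\}\times(2\mathbb Z+1))$; $C_J^{(2)}=(C_J\times2\mathbb Z)\cup(D_J\times(2\mathbb Z+1))$; $BC_J^{(2)}=(B_J\times2\mathbb Z)\cup(BC_J\times(2\mathbb Z+1))$, $BC_J=B_J\cup C_J$. In cases $C_J^{(1)},C_J^{(2)},BC_J^{(2)}$ the normalization gives $\|\varepsilon_j\|^2=1/2$, otherwise $\|\varepsilon_j\|^2=1$. Coroot of $(\alpha,n)$: $\check\alpha-\frac{2n}{(\alpha,\alpha)}c$. $\widehat{\mathcal W}$ is the group generated by reflections $\lambda\mapsto\lambda-\lambda(\check{\underline\alpha})\underline\alpha$, $\underline\alpha\in\Delta_{\mathfrak g}$. $\lambda\in i\mathfrak t_{\mathfrak g}^*$ (algebraic dual) is $d$-minimal if $\lambda(d)=\min(\widehat{\mathcal W}\lambda)(d)$. *)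

From Stdlib Require Import Reals ZArith List Relations ClassicalEpsilon.
Open Scope R_scope.

(* Weight lambda in i t_g^*, recorded by the data the Weyl group action sees:
   lc = lambda(c), lt j = lambda(E_j), ld = lambda(d). *)
Record weight (J : Type) := mkW { lc : R; lt : J -> R; ld : R }.
Arguments mkW {J}. Arguments lc {J}. Arguments lt {J}. Arguments ld {J}.

Definition delta {J : Type} (i j : J) : R :=
  if excluded_middle_informative (i = j) then 1 else 0.

Definition sgn (b : bool) : R := if b then 1 else -1.

(* Finite roots in t^*:  Pair j k s t = s eps_j + t eps_k (j <> k),
   Sing j s = s eps_j,  Doub j s = 2 s eps_j. *)
Inductive froot (J : Type) :=
| Pair (j k : J) (s t : bool)
| Sing (j : J) (s : bool)
| Doub (j : J) (s : bool).
Arguments Pair {J}. Arguments Sing {J}. Arguments Doub {J}.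

Definition wf_froot {J : Type} (a : froot J) : Prop :=
  match a with Pair j k _ _ => j <> k | _ => True end.

Definition coeff {J : Type} (a : froot J) (i : J) : R :=
  match a with
  | Pair j k s t => sgn s * delta i j + sgn t * delta i k
  | Sing j s => sgn s * delta i j
  | Doub j s => 2 * sgn s * delta i j
  end.

Definition sqcoeff {J : Type} (a : froot J) : R :=
  match a with Pair _ _ _ _ => 2 | Sing _ _ => 1 | Doub _ _ => 4 end.

(* lambda(check alpha) = 2 sum_i a_i lambda_i / sum_i a_i^2 *)
Definition lam_check {J : Type} (a : froot J) (l : weight J) : R :=
  match a with
  | Pair j k s t => sgn s * lt l j + sgn t * lt l k
  | Sing j s => 2 * sgn s * lt l j
  | Doub j s => sgn s * lt l j
  end.

Inductive lsys := A1 | B1 | C1 | D1 | B2 | C2 | BC2.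

(* ||eps_j||^2 *)
Definition kappa (X : lsys) : R :=
  match X with C1 | C2 | BC2 => /2 | _ => 1 end.

Definition norm2 {J : Type} (X : lsys) (a : froot J) : R := kappa X * sqcoeff a.

Definition in_A {J} (a : froot J) : Prop :=
  match a with Pair _ _ s t => s <> t | _ => False end.
Definition in_B {J} (a : froot J) : Prop :=
  match a with Doub _ _ => False | _ => True end.
Definition in_C {J} (a : froot J) : Prop :=
  match a with Sing _ _ => False | _ => True end.
Definition in_D {J} (a : froot J) : Prop :=
  match a with Pair _ _ _ _ => True | _ => False end.
Definition in_BC {J} (a : froot J) : Prop := True.
Definition in_short {J} (a : froot J) : Prop :=
  match a with Sing _ _ => True | _ => False end.

Definition is_root {J : Type} (X : lsys) (a : froot J) (n : Z) : Prop :=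
  wf_froot a /\
  match X with
  | A1 => in_A a
  | B1 => in_B a
  | C1 => in_C a
  | D1 => in_D a
  | B2 => (Z.Even n /\ in_B a) \/ (Z.Odd n /\ in_short a)
  | C2 => (Z.Even n /\ in_C a) \/ (Z.Odd n /\ in_D a)
  | BC2 => (Z.Even n /\ in_B a) \/ (Z.Odd n /\ in_BC a)
  end.

(* lambda evaluated on the coroot  check alpha - 2n/(alpha,alpha) c *)
Definition lam_coroot {J : Type} (X : lsys) (a : froot J) (n : Z) (l : weight J) : R :=
  lam_check a l - 2 * IZR n / norm2 X a * lc l.

(* reflection  lambda - lambda(coroot) (alpha,n);  (alpha,n)(c)=0, (alpha,n)(E_i)=alpha(E_i), (alpha,n)(d)=n *)
Definition reflect {J : Type} (X : lsys) (a : froot J) (n : Z) (l : weight J) : weight J :=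
  let m := lam_coroot X a n l in
  mkW (lc l) (fun i => lt l i - m * coeff a i) (ld l - m * IZR n).

Definition refl_step {J : Type} (X : lsys) (l mu : weight J) : Prop :=
  exists a n, is_root X a n /\ mu = reflect X a n l.

Definition in_orbit {J : Type} (X : lsys) (l mu : weight J) : Prop :=
  clos_refl_trans (weight J) (refl_step X) l mu.

Definition d_minimal {J : Type} (X : lsys) (l : weight J) : Prop :=
  forall mu, in_orbit X l mu -> ld l <= ld mu.

Definition infinite_type (J : Type) : Prop :=
  forall l : list J, exists x, ~ In x l.

Definition minimality_cond {J : Type} (X : lsys) (l : weight J) : Prop :=
  match X with
  | A1 => forall j k, lt l j - lt l k <= lc l
  | B1 | D1 => forall j k, j <> k -> Rabs (lt l j) + Rabs (lt l k) <= lc l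
  | C1 | B2 | BC2 => forall j, Rabs (lt l j) <= lc l
  | C2 => forall j k, j <> k -> Rabs (lt l j) + Rabs (lt l k) <= 2 * lc l
  end.

(* The reflection of lambda in a root (alpha, 1) changes lambda(d)
   by -lambda(coroot); d-minimality therefore forces lambda(coroot) <= 0, and
   choosing alpha according to the signs of the coordinates lambda_j turns this
   inequality into the condition.

   Each reflection acts on the coordinates lambda_j by a signed
   permutation followed by a translation by a lattice vector times lambda(c),
   and moves lambda(d) by kappa/(2 lambda(c)) times the change of the sum of
   squares of the (finitely many) coordinates involved.  The key
   inequality [excess_nonneg] states that translating coordinates which satisfy
   the condition by such a lattice vector never decreases the sum of squares;
   it is proved separately for the four lattices that occur (zero sum, even
   sum, even entries, even entries with sum divisible by 4). *)

From Stdlib Require Import Reals ZArith List Relations ClassicalEpsilon.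
From Stdlib Require Import Lra Lia Psatz.
(* Imported last so that the names of the seven root systems take precedence
   over homonyms in the real-number library. *)
Open Scope R_scope.

Section FiniteSums.
Context {J : Type}.

Fixpoint lsum (f : J -> R) (S : list J) : R :=
  match S with nil => 0 | x :: S' => f x + lsum f S' end.
Fixpoint zsum (f : J -> Z) (S : list J) : Z :=
  match S with nil => 0%Z | x :: S' => (f x + zsum f S')%Z end.

Lemma lsum_ext (f g : J -> R) S :
  (forall x, In x S -> f x = g x) -> lsum f S = lsum g S.
Proof. induction S as [|x S IH]; simpl; intros H; [reflexivity|]. rewrite H, IH; auto. Qed.

Lemma lsum_zero (f : J -> R) S : (forall x, In x S -> f x = 0) -> lsum f S = 0.
Proof. induction S as [|x S IH]; simpl; intros H; [reflexivity|]. rewrite H, IH; auto; lra. Qed.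

Lemma lsum_le (f g : J -> R) S :
  (forall x, In x S -> f x <= g x) -> lsum f S <= lsum g S.
Proof.
  induction S as [|x S IH]; simpl; intros H; [lra|].
  pose proof (H x (or_introl eq_refl)). pose proof (IH (fun y Hy => H y (or_intror Hy))). lra.
Qed.

Lemma lsum_plus (f g : J -> R) S :
  lsum (fun x => f x + g x) S = lsum f S + lsum g S.
Proof. induction S as [|x S IH]; simpl; [lra|]. rewrite IH; lra. Qed.

Lemma lsum_minus (f g : J -> R) S :
  lsum (fun x => f x - g x) S = lsum f S - lsum g S.
Proof. induction S as [|x S IH]; simpl; [lra|]. rewrite IH; lra. Qed.

Lemma lsum_scal (f : J -> R) k S : lsum (fun x => k * f x) S = k * lsum f S.
Proof. induction S as [|x S IH]; simpl; [lra|]. rewrite IH; lra. Qed.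

Lemma IZR_zsum (w : J -> Z) S : IZR (zsum w S) = lsum (fun x => IZR (w x)) S.
Proof. induction S as [|x S IH]; simpl; [reflexivity|]. rewrite plus_IZR, IH; reflexivity. Qed.

Lemma zsum_ext (v w : J -> Z) S : (forall x, v x = w x) -> zsum v S = zsum w S.
Proof. intros H. induction S as [|x S IH]; cbn [zsum]; [reflexivity|]. rewrite H, IH; reflexivity. Qed.

Lemma zsum_double (w : J -> Z) S : zsum (fun x => 2 * w x)%Z S = (2 * zsum w S)%Z.
Proof. induction S as [|x S IH]; cbn [zsum]; [reflexivity|]. rewrite IH; ring. Qed.

Lemma lsum_single (f : J -> R) S j :
  NoDup S -> In j S -> (forall x, x <> j -> f x = 0) -> lsum f S = f j.
Proof.
  induction S as [|x S IH]; simpl; intros ND Hj H; [contradiction|].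
  inversion ND as [|? ? HxS NDS]; subst.
  destruct Hj as [<-|Hj].
  - rewrite lsum_zero; [lra|]. intros y Hy. apply H. intros ->. contradiction.
  - rewrite H, IH by (auto; intros ->; contradiction). lra.
Qed.

Lemma lsum_pair (f : J -> R) S j k :
  NoDup S -> In j S -> In k S -> j <> k ->
  (forall x, x <> j -> x <> k -> f x = 0) -> lsum f S = f j + f k.
Proof.
  intros ND Hj Hk jk H.
  set (fj := fun x => if excluded_middle_informative (x = j) then f x else 0).
  rewrite (lsum_ext f (fun x => fj x + (f x - fj x))) by (intros; ring).
  rewrite lsum_plus, (lsum_single fj S j), (lsum_single _ S k); auto; unfold fj.
  - destruct (excluded_middle_informative (j = j)), (excluded_middle_informative (k = j));
      congruence || lra.
  - intros x nk. destruct (excluded_middle_informative (x = j)); [lra|]. rewrite H; auto; lra.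
  - intros x nj. destruct (excluded_middle_informative (x = j)); tauto.
Qed.

Lemma zsum_single_change (w w' : J -> Z) S j :
  NoDup S -> In j S -> (forall x, x <> j -> w' x = w x) ->
  zsum w' S = (zsum w S + (w' j - w j))%Z.
Proof.
  intros ND Hj H. apply eq_IZR. rewrite plus_IZR, minus_IZR, !IZR_zsum.
  assert (E := lsum_single (fun x => IZR (w' x) - IZR (w x)) S j ND Hj).
  rewrite lsum_minus in E.
  enough (lsum (fun x => IZR (w' x)) S - lsum (fun x => IZR (w x)) S
          = IZR (w' j) - IZR (w j)) by lra.
  apply E. intros x nj. rewrite H; auto; ring.
Qed.

Lemma zsum_pair_change (w w' : J -> Z) S j k :
  NoDup S -> In j S -> In k S -> j <> k -> (forall x, x <> j -> x <> k -> w' x = w x) ->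
  zsum w' S = (zsum w S + (w' j - w j) + (w' k - w k))%Z.
Proof.
  intros ND Hj Hk jk H. apply eq_IZR. rewrite !plus_IZR, !minus_IZR, !IZR_zsum.
  assert (E := lsum_pair (fun x => IZR (w' x) - IZR (w x)) S j k ND Hj Hk jk).
  rewrite lsum_minus in E.
  enough (lsum (fun x => IZR (w' x)) S - lsum (fun x => IZR (w x)) S
          = IZR (w' j) - IZR (w j) + (IZR (w' k) - IZR (w k))) by lra.
  apply E. intros x nj nk. rewrite H; auto; ring.
Qed.

Lemma lsum_filter (P : J -> bool) (a : J -> R) S :
  lsum (fun x => if P x then a x else 0) S = lsum a (filter P S).
Proof. induction S as [|x S IH]; simpl; [reflexivity|]. destruct (P x); simpl; rewrite IH; lra. Qed.

Lemma zsum_parity (w : J -> Z) S :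
  Z.odd (zsum w S) = Nat.odd (length (filter (fun x => Z.odd (w x)) S)).
Proof.
  induction S as [|x S IH]; simpl; [reflexivity|].
  rewrite Z.odd_add, IH. destruct (Z.odd (w x)); simpl.
  - rewrite Nat.odd_succ, <- Nat.negb_odd. reflexivity.
  - destruct (Nat.odd _); reflexivity.
Qed.

Lemma list_argmin (f : J -> R) S :
  S <> nil -> exists m, In m S /\ forall x, In x S -> f m <= f x.
Proof.
  induction S as [|a S IH]; intros Hne; [congruence|].
  destruct S as [|b S'].
  - exists a. split; [left; reflexivity|]. intros x [->|[]]. lra.
  - destruct IH as [m [Hm Hmin]]; [discriminate|].
    destruct (Rle_dec (f a) (f m)).
    + exists a. split; [left; reflexivity|]. intros x [->|Hx]; [lra|]. specialize (Hmin x Hx). lra.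
    + exists m. split; [right; exact Hm|]. intros x [->|Hx]; [lra|]. auto.
Qed.

(* If any two distinct terms have a nonnegative sum, then a nonempty sum is
   bounded below by one of its terms, and a sum of length other than 1 is
   nonnegative: at most one term can be negative, and it has a partner. *)
Definition pairwise_nonneg (a : J -> R) (T : list J) : Prop :=
  forall x y, In x T -> In y T -> x <> y -> 0 <= a x + a y.

Lemma lsum_above_member (a : J -> R) x T :
  NoDup (x :: T) -> pairwise_nonneg a (x :: T) ->
  exists y, In y (x :: T) /\ a y <= lsum a (x :: T).
Proof.
  revert x. induction T as [|z T IH]; intros x ND Hp.
  - exists x. simpl. split; [left; reflexivity | lra].
  - inversion ND as [|? ? HxT NDT]; subst.
    destruct (IH z NDT) as [y [Hy Hay]]; [intros u v Hu Hv; apply Hp; simpl in *; tauto|].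
    assert (Hxy : 0 <= a x + a y) by (apply Hp; simpl in *; auto; intros ->; contradiction).
    cbn [lsum] in *. destruct (Rle_dec 0 (a x)).
    + exists y. split; [right; exact Hy | lra].
    + exists x. split; [left; reflexivity | lra].
Qed.

Lemma lsum_pairwise_nonneg (a : J -> R) T :
  NoDup T -> length T <> 1%nat -> pairwise_nonneg a T -> 0 <= lsum a T.
Proof.
  destruct T as [|x [|z T]]; simpl; intros ND Hl Hp; [lra | lia |].
  inversion ND as [|? ? HxT NDT]; subst.
  destruct (lsum_above_member a z T NDT) as [y [Hy Hay]];
    [intros u v Hu Hv; apply Hp; simpl in *; tauto|].
  assert (Hxy : 0 <= a x + a y) by (apply Hp; simpl in *; auto; intros ->; contradiction).
  simpl in Hay. lra.
Qed.

End FiniteSums.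

Lemma IZR_trichotomy (z : Z) : 1 <= IZR z \/ IZR z = 0 \/ IZR z <= -1.
Proof.
  destruct (Z.lt_total z 0) as [h|[->|h]].
  - right; right. apply IZR_le. lia.
  - right; left. reflexivity.
  - left. apply IZR_le. lia.
Qed.

Lemma Rabs_bounds x c : Rabs x <= c -> - c <= x <= c.
Proof. unfold Rabs. destruct (Rcase_abs x); lra. Qed.

(* For |v| <= c, translating v by c z (z an integer) changes v^2 by
   c z (2 v + c z): by at least c (c - 2|v|) if z is odd, and by a nonnegative
   amount if z is even. *)
Lemma translate_square_bound c v z : Rabs v <= c ->
  (if Z.odd z then c - 2 * Rabs v else 0) <= IZR z * (2 * v + c * IZR z).
Proof.
  intros Hv. pose proof (Rabs_bounds _ _ Hv). pose proof (Rabs_pos v).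
  assert (Hav : - Rabs v <= v <= Rabs v) by (unfold Rabs; destruct (Rcase_abs v); lra).
  assert (Hz : (3 <= z)%Z \/ z = 2%Z \/ z = 1%Z \/ z = 0%Z \/ z = (-1)%Z \/ z = (-2)%Z \/ (z <= -3)%Z)
    by lia.
  destruct Hz as [h|[h|[h|[h|[h|[h|h]]]]]]; try (subst; simpl; lra).
  - apply IZR_le in h.
    assert (0 <= (IZR z - 3) * (c * IZR z + c)) by (apply Rmult_le_pos; nra).
    destruct (Z.odd z); nra.
  - apply IZR_le in h.
    assert (0 <= (- IZR z - 3) * (- c * IZR z + c)) by (apply Rmult_le_pos; nra).
    destruct (Z.odd z); nra.
Qed.

(* For 0 <= d <= c and an integer z: (d + c z)^2 - d^2 >= c^2 z.  Used with
   d = nu x - min nu in type A, where the right-hand sides cancel in total. *)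
Lemma translate_spread_bound c d z : 0 <= d <= c ->
  0 <= IZR z * (2 * d + c * (IZR z - 1)).
Proof.
  intros Hd. destruct (IZR_trichotomy z) as [h|[h|h]].
  - apply Rmult_le_pos; nra.
  - rewrite h. lra.
  - assert (2 * d + c * (IZR z - 1) <= 0) by nra. nra.
Qed.

Section Excess.
Context {J : Type}.

(* The quantity sum_S ((nu + c w)^2 - nu^2): up to the factor kappa/(2c) this
   is the change of lambda(d) along the orbit (see [orbit_data] below). *)
Definition excess (c : R) (nu : J -> R) (w : J -> Z) (S : list J) : R :=
  lsum (fun x => (nu x + c * IZR (w x)) ^ 2 - nu x ^ 2) S.

Lemma excess_nonneg_zero_sum c nu w S : 0 < c ->
  (forall x y, nu x - nu y <= c) -> zsum w S = 0%Z -> 0 <= excess c nu w S.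
Proof.
  intros Hc Hspread Hsum. destruct S as [|a S']; [unfold excess; simpl; lra|].
  destruct (list_argmin nu (a :: S')) as [m [_ Hm]]; [discriminate|].
  apply Rle_trans with (lsum (fun x => (c * c + 2 * c * nu m) * IZR (w x)) (a :: S')).
  - rewrite lsum_scal, <- IZR_zsum, Hsum. lra.
  - apply lsum_le. intros x Hx.
    pose proof (translate_spread_bound c (nu x - nu m) (w x)
                  ltac:(specialize (Hm x Hx); specialize (Hspread x m); lra)) as B.
    assert (0 <= c * (IZR (w x) * (2 * (nu x - nu m) + c * (IZR (w x) - 1))))
      by (apply Rmult_le_pos; lra).
    nra.
Qed.

Lemma excess_nonneg_even c nu w S :
  (forall x, Rabs (nu x) <= c) -> (forall x, (w x mod 2 = 0)%Z) -> 0 <= excess c nu w S.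
Proof.
  intros Hnu Hw. apply Rle_trans with (lsum (fun _ => 0) S); [rewrite lsum_zero; auto; lra|].
  apply lsum_le. intros x _.
  pose proof (translate_square_bound c (nu x) (w x) (Hnu x)) as B.
  assert (Hodd : Z.odd (w x) = false)
    by (pose proof (Zmod_odd (w x)); destruct (Z.odd (w x)); congruence).
  rewrite Hodd in B. pose proof (Rabs_pos (nu x)). pose proof (Hnu x).
  assert (0 <= c * (IZR (w x) * (2 * nu x + c * IZR (w x)))) by (apply Rmult_le_pos; lra).
  nra.
Qed.

(* Each odd translate costs at least c - 2|nu x|, there are never exactly one
   of them, and two such costs always have a nonnegative sum. *)
Lemma excess_nonneg_even_sum c nu w S : 0 < c -> NoDup S ->
  (forall x y, x <> y -> Rabs (nu x) + Rabs (nu y) <= c) -> (forall x, Rabs (nu x) <= c) ->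
  (zsum w S mod 2 = 0)%Z -> 0 <= excess c nu w S.
Proof.
  intros Hc ND Hpair Hnu Hsum.
  set (odd := fun x => Z.odd (w x)).
  apply Rle_trans with (lsum (fun x => c * (c - 2 * Rabs (nu x))) (filter odd S)).
  - rewrite lsum_scal. apply Rmult_le_pos; [lra|]. apply lsum_pairwise_nonneg.
    + apply NoDup_filter, ND.
    + intros Hl. pose proof (zsum_parity w S) as P. pose proof (Zmod_odd (zsum w S)) as M.
      fold odd in P. rewrite Hl in P. rewrite P in M. simpl in M. congruence.
    + intros x y _ _ nxy. specialize (Hpair x y nxy). lra.
  - rewrite <- lsum_filter. apply lsum_le. intros x _.
    pose proof (translate_square_bound c (nu x) (w x) (Hnu x)) as B.
    replace ((nu x + c * IZR (w x)) ^ 2 - nu x ^ 2)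
      with (c * (IZR (w x) * (2 * nu x + c * IZR (w x)))) by ring.
    unfold odd. destruct (Z.odd (w x)).
    + apply Rmult_le_compat_l; lra.
    + apply Rmult_le_pos; lra.
Qed.

(* Type C^(2): after halving, an even translation with total divisible by 4
   becomes a type B translation. *)
Lemma excess_nonneg_C2 c nu w S : 0 < c -> NoDup S ->
  (forall x y, x <> y -> Rabs (nu x) + Rabs (nu y) <= 2 * c) -> (forall x, Rabs (nu x) <= 2 * c) ->
  (forall x, (w x mod 2 = 0)%Z) -> (zsum w S mod 4 = 0)%Z -> 0 <= excess c nu w S.
Proof.
  intros Hc ND Hpair Hnu Hw Hsum.
  set (z := fun x => (w x / 2)%Z).
  assert (Hz : forall x, w x = (2 * z x)%Z)
    by (intros x; pose proof (Z.div_mod (w x) 2 ltac:(lia)); specialize (Hw x); unfold z; lia).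
  assert (Habs : forall x, Rabs (nu x / 2) = Rabs (nu x) / 2)
    by (intros x; unfold Rdiv; rewrite Rabs_mult, (Rabs_right (/ 2)); lra).
  assert (E : excess c nu w S = 4 * excess c (fun x => nu x / 2) z S).
  { unfold excess. rewrite <- lsum_scal. apply lsum_ext. intros x _.
    rewrite Hz, mult_IZR. field. }
  rewrite E. apply Rmult_le_pos; [lra|]. apply excess_nonneg_even_sum; auto.
  - intros x y nxy. rewrite !Habs. specialize (Hpair x y nxy). lra.
  - intros x. rewrite Habs. specialize (Hnu x). lra.
  - rewrite (zsum_ext w (fun x => 2 * z x)%Z), zsum_double in Hsum by auto.
    Z.div_mod_to_equations. lia.
Qed.

End Excess.

(* The minimality condition read on an arbitrary coordinate function nu, and the
   lattice of translations (in units of lambda(c)) that the affine Weyl group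
   of X produces on the coordinates indexed by S. *)
Definition cond {J : Type} (X : lsys) (c : R) (nu : J -> R) : Prop :=
  minimality_cond X (mkW c nu 0).

Definition translation_lattice {J : Type} (X : lsys) (S : list J) (w : J -> Z) : Prop :=
  match X with
  | A1 => zsum w S = 0%Z
  | B1 | D1 => (zsum w S mod 2 = 0)%Z
  | C1 | B2 | BC2 => forall x, (w x mod 2 = 0)%Z
  | C2 => (forall x, (w x mod 2 = 0)%Z) /\ (zsum w S mod 4 = 0)%Z
  end.

Lemma pair_bound_single {J : Type} (HJ : infinite_type J) (nu : J -> R) b :
  (forall j k, j <> k -> Rabs (nu j) + Rabs (nu k) <= b) -> forall j, Rabs (nu j) <= b.
Proof.
  intros H j. destruct (HJ (j :: nil)) as [k Hk].
  assert (k <> j) by (intros ->; apply Hk; left; reflexivity).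
  specialize (H j k ltac:(auto)). pose proof (Rabs_pos (nu k)). lra.
Qed.

Lemma excess_nonneg {J : Type} (HJ : infinite_type J) X c (nu : J -> R) w S :
  0 < c -> NoDup S -> cond X c nu -> translation_lattice X S w -> 0 <= excess c nu w S.
Proof.
  intros Hc ND Hcond Hlat. unfold cond in Hcond.
  destruct X; simpl in Hcond, Hlat.
  - apply excess_nonneg_zero_sum; auto.
  - apply excess_nonneg_even_sum; auto. apply (pair_bound_single HJ); auto.
  - apply excess_nonneg_even; auto.
  - apply excess_nonneg_even_sum; auto. apply (pair_bound_single HJ); auto.
  - apply excess_nonneg_even; auto.
  - destruct Hlat. apply excess_nonneg_C2; auto. apply (pair_bound_single HJ); auto.
  - apply excess_nonneg_even; auto.
Qed.

Section Reflections.
Context {J : Type}.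

Lemma delta_same (x : J) : delta x x = 1.
Proof. unfold delta. destruct (excluded_middle_informative (x = x)); tauto. Qed.
Lemma delta_other (x y : J) : x <> y -> delta x y = 0.
Proof. unfold delta. destruct (excluded_middle_informative (x = y)); tauto. Qed.

Definition zsign (b : bool) : Z := if b then 1%Z else (-1)%Z.
Lemma IZR_zsign b : IZR (zsign b) = sgn b.
Proof. destruct b; reflexivity. Qed.

Definition kappa_inv (X : lsys) : Z := match X with C1 | C2 | BC2 => 2 | _ => 1 end%Z.

(* A reflection acts on the coordinates either by changing the sign of one of
   them and translating it by a multiple of lambda(c) (roots 2 eps_j and eps_j),
   or by a signed transposition of two of them followed by translations (roots
   eps_j +- eps_k); in both cases lambda(d) moves by kappa/(2 lambda(c)) times
   the change of the sum of squares of the coordinates. *)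
Definition one_point_move (X : lsys) (mu mu' : weight J) (j : J) (q : Z) : Prop :=
  lc mu' = lc mu /\ (forall x, x <> j -> lt mu' x = lt mu x) /\
  lt mu' j = - lt mu j + lc mu * IZR q /\
  ld mu' - ld mu = kappa X / (2 * lc mu) * (lt mu' j ^ 2 - lt mu j ^ 2).

Definition two_point_move (X : lsys) (mu mu' : weight J) (j k : J) (p qj qk : Z) : Prop :=
  lc mu' = lc mu /\ (forall x, x <> j -> x <> k -> lt mu' x = lt mu x) /\
  lt mu' j = - IZR p * lt mu k + lc mu * IZR qj /\
  lt mu' k = - IZR p * lt mu j + lc mu * IZR qk /\
  ld mu' - ld mu =
    kappa X / (2 * lc mu) * ((lt mu' j ^ 2 - lt mu j ^ 2) + (lt mu' k ^ 2 - lt mu k ^ 2)).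

Lemma reflect_sing_move X (mu : weight J) j s n : 0 < lc mu ->
  one_point_move X mu (reflect X (Sing j s) n mu) j (zsign s * (2 * kappa_inv X * n)).
Proof.
  intros Hc. unfold one_point_move. simpl. rewrite delta_same.
  split; [reflexivity|]. split; [intros x nx; rewrite delta_other by exact nx; ring|].
  unfold lam_coroot, norm2. rewrite !mult_IZR, IZR_zsign.
  split; destruct X, s; simpl; field; lra.
Qed.

Lemma reflect_doub_move X (mu : weight J) j s n : 0 < lc mu ->
  one_point_move X mu (reflect X (Doub j s) n mu) j (zsign s * (kappa_inv X * n)).
Proof.
  intros Hc. unfold one_point_move. simpl. rewrite delta_same.
  split; [reflexivity|]. split; [intros x nx; rewrite delta_other by exact nx; ring|].
  unfold lam_coroot, norm2. rewrite !mult_IZR, IZR_zsign.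
  split; destruct X, s; simpl; field; lra.
Qed.

Lemma reflect_pair_move X (mu : weight J) j k s t n : j <> k -> 0 < lc mu ->
  two_point_move X mu (reflect X (Pair j k s t) n mu) j k
    (zsign s * zsign t) (zsign s * (kappa_inv X * n)) (zsign t * (kappa_inv X * n)).
Proof.
  intros jk Hc. assert (kj : k <> j) by auto.
  unfold two_point_move. simpl. rewrite !delta_same, !(delta_other j k), !(delta_other k j) by auto.
  split; [reflexivity|].
  split; [intros x nj nk; rewrite !delta_other by auto; ring|].
  unfold lam_coroot, norm2. rewrite !mult_IZR, !IZR_zsign.
  split; [|split]; destruct X, s, t; simpl; field; lra.
Qed.

End Reflections.

Section Updates.
Context {J : Type}.

Definition upd {A : Type} (f : J -> A) (j : J) (v : A) : J -> A :=
  fun x => if excluded_middle_informative (x = j) then v else f x.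

Lemma upd_same {A : Type} (f : J -> A) j v : upd f j v j = v.
Proof. unfold upd. destruct (excluded_middle_informative (j = j)); tauto. Qed.
Lemma upd_other {A : Type} (f : J -> A) j v x : x <> j -> upd f j v x = f x.
Proof. unfold upd. destruct (excluded_middle_informative (x = j)); tauto. Qed.

Definition swap (j k x : J) : J :=
  if excluded_middle_informative (x = j) then k
  else if excluded_middle_informative (x = k) then j else x.

Lemma swap_injective (j k : J) : forall x y, x <> y -> swap j k x <> swap j k y.
Proof.
  intros x y nxy. unfold swap.
  destruct (excluded_middle_informative (x = j)), (excluded_middle_informative (x = k)),
    (excluded_middle_informative (y = j)), (excluded_middle_informative (y = k));
    subst; congruence.
Qed.

Lemma cond_permute X c (nu nu' : J -> R) (tau : J -> J) :
  (forall x y, x <> y -> tau x <> tau y) -> (forall x, nu' x = nu (tau x)) ->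
  cond X c nu -> cond X c nu'.
Proof.
  intros Hinj Hnu. unfold cond. destruct X; simpl; intros H; intros;
    rewrite ?Hnu; apply H; auto.
Qed.

Lemma cond_signed_permute X c (nu nu' : J -> R) (tau : J -> J) : X <> A1 ->
  (forall x y, x <> y -> tau x <> tau y) -> (forall x, Rabs (nu' x) = Rabs (nu (tau x))) ->
  cond X c nu -> cond X c nu'.
Proof.
  intros NA Hinj Hnu. unfold cond. destruct X; simpl; try congruence; intros H; intros;
    rewrite ?Hnu; apply H; auto.
Qed.

Lemma cond_one_point X c (nu : J -> R) j : X <> A1 ->
  cond X c nu -> cond X c (upd nu j (- nu j)).
Proof.
  intros NA. apply cond_signed_permute with (fun x => x); auto.
  intros x. unfold upd. destruct (excluded_middle_informative (x = j)) as [->|]; auto.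
  apply Rabs_Ropp.
Qed.

Definition signed_swap (f : J -> R) (j k : J) (p : R) : J -> R :=
  upd (upd f j (- p * f k)) k (- p * f j).

Definition swap_shift (w : J -> Z) (j k : J) (p qj qk : Z) : J -> Z :=
  upd (upd w j (- p * w k + qj)%Z) k (- p * w j + qk)%Z.

Lemma signed_swap_cases (f : J -> R) j k p x : j <> k ->
  signed_swap f j k p x = f (swap j k x) \/ signed_swap f j k p x = - p * f (swap j k x).
Proof.
  intros jk. unfold signed_swap, swap.
  destruct (excluded_middle_informative (x = j)) as [->|nj].
  - right. rewrite upd_other, upd_same by auto. reflexivity.
  - destruct (excluded_middle_informative (x = k)) as [->|nk].
    + right. apply upd_same.
    + left. rewrite !upd_other by auto. reflexivity.
Qed.

Lemma cond_two_point X c (nu : J -> R) j k s t n : is_root X (Pair j k s t) n ->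
  cond X c nu -> cond X c (signed_swap nu j k (IZR (zsign s * zsign t))).
Proof.
  intros [jk Hr]. simpl in jk.
  destruct (excluded_middle_informative (X = A1)) as [->|NA].
  - (* in type A the root is eps_j - eps_k, so the sign -p is 1 *)
    assert (Hp : IZR (zsign s * zsign t) = -1)
      by (destruct s, t; simpl in *; try congruence; lra).
    apply cond_permute with (swap j k); [apply swap_injective|].
    intros x. destruct (signed_swap_cases nu j k (IZR (zsign s * zsign t)) x jk) as [-> | ->]; [reflexivity|].
    rewrite Hp. ring.
  - apply cond_signed_permute with (swap j k); auto; [apply swap_injective|].
    intros x. destruct (signed_swap_cases nu j k (IZR (zsign s * zsign t)) x jk) as [-> | ->]; [reflexivity|].
    rewrite Rabs_mult, Rabs_Ropp. replace (Rabs (IZR (zsign s * zsign t))) with 1; [ring|].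
    destruct s, t; simpl; unfold Rabs; destruct (Rcase_abs _); lra.
Qed.

End Updates.

Section Lattices.
Context {J : Type}.

(* The translation by q that a reflection in a root 2 eps_j or eps_j adds to
   the coordinate j: it never occurs in type A, is even, and is divisible by 4
   in type C^(2) (where 2 eps_j only occurs with n even). *)
Definition admissible_shift (X : lsys) (q : Z) : Prop :=
  X <> A1 /\ (q mod 2 = 0)%Z /\ (X = C2 -> (q mod 4 = 0)%Z).

Lemma sing_shift_admissible X (j : J) s n :
  is_root X (Sing j s) n -> admissible_shift X (zsign s * (2 * kappa_inv X * n)).
Proof.
  intros [_ Hr]. unfold admissible_shift.
  destruct X; simpl in Hr; repeat split; try discriminate; try tauto;
    destruct s; cbn [zsign kappa_inv]; Z.div_mod_to_equations; lia.
Qed.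

Lemma doub_shift_admissible X (j : J) s n :
  is_root X (Doub j s) n -> admissible_shift X (zsign s * (kappa_inv X * n)).
Proof.
  intros [_ Hr]. unfold admissible_shift.
  destruct X; simpl in Hr; repeat split; try discriminate; try tauto;
    try (destruct s; cbn [zsign kappa_inv]; Z.div_mod_to_equations; lia).
  intros _. destruct Hr as [[[m ->] _] | [_ []]].
  destruct s; cbn [zsign kappa_inv]; Z.div_mod_to_equations; lia.
Qed.

Lemma lattice_one_point X S (w : J -> Z) j q :
  admissible_shift X q -> NoDup S -> In j S ->
  translation_lattice X S w -> translation_lattice X S (upd w j (- w j + q)%Z).
Proof.
  intros [NA [Hq2 Hq4]] ND Hj.
  assert (Hsum : zsum (upd w j (- w j + q)%Z) S = (zsum w S + (- w j + q - w j))%Z).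
  { rewrite (zsum_single_change w _ S j ND Hj) by (intros; apply upd_other; auto).
    rewrite upd_same. reflexivity. }
  assert (Hval : forall x, upd w j (- w j + q)%Z x = w x \/ upd w j (- w j + q)%Z x = (- w j + q)%Z).
  { intros x. unfold upd. destruct (excluded_middle_informative (x = j)); auto. }
  unfold translation_lattice. rewrite Hsum.
  destruct X; try congruence; intros H;
    try (Z.div_mod_to_equations; lia);
    try (intros x; pose proof (H j); destruct (Hval x) as [-> | ->]; auto;
         Z.div_mod_to_equations; lia).
  destruct H as [Hw H4]. specialize (Hq4 eq_refl). pose proof (Hw j). split.
  - intros x. destruct (Hval x) as [-> | ->]; auto. Z.div_mod_to_equations; lia.
  - Z.div_mod_to_equations; lia.
Qed.

Lemma lattice_two_point X S (w : J -> Z) j k s t n :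
  is_root X (Pair j k s t) n -> NoDup S -> In j S -> In k S -> translation_lattice X S w ->
  translation_lattice X S
    (swap_shift w j k (zsign s * zsign t) (zsign s * (kappa_inv X * n)) (zsign t * (kappa_inv X * n))).
Proof.
  intros [jk Hr] ND Hj Hk. simpl in jk. assert (kj : k <> j) by auto. unfold swap_shift.
  set (wj := (- (zsign s * zsign t) * w k + zsign s * (kappa_inv X * n))%Z).
  set (wk := (- (zsign s * zsign t) * w j + zsign t * (kappa_inv X * n))%Z).
  assert (Hsum : zsum (upd (upd w j wj) k wk) S = (zsum w S + (wj - w j) + (wk - w k))%Z).
  { rewrite (zsum_pair_change w _ S j k ND Hj Hk jk)
      by (intros; rewrite !upd_other; auto).
    rewrite upd_same, upd_other, upd_same by auto. reflexivity. }
  assert (Hval : forall x, upd (upd w j wj) k wk x = w x \/ upd (upd w j wj) k wk x = wj \/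
                           upd (upd w j wj) k wk x = wk).
  { intros x. unfold upd.
    destruct (excluded_middle_informative (x = k)), (excluded_middle_informative (x = j)); auto. }
  unfold translation_lattice. rewrite Hsum. unfold wj, wk in *.
  destruct X; simpl in Hr; unfold kappa_inv in *; intros H.
  - destruct s, t; unfold zsign in *; try congruence; lia.
  - destruct s, t; unfold zsign; Z.div_mod_to_equations; lia.
  - intros x. pose proof (H j). pose proof (H k).
    destruct (Hval x) as [-> | [-> | ->]]; auto;
      destruct s, t; unfold zsign; Z.div_mod_to_equations; lia.
  - destruct s, t; unfold zsign; Z.div_mod_to_equations; lia.
  - intros x. pose proof (H j). pose proof (H k).
    destruct Hr as [[[m ->] _] | [_ []]].
    destruct (Hval x) as [-> | [-> | ->]]; auto;
      destruct s, t; unfold zsign; Z.div_mod_to_equations; lia.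
  - destruct H as [Hw H4]. pose proof (Hw j). pose proof (Hw k). split.
    + intros x. destruct (Hval x) as [-> | [-> | ->]]; auto;
        destruct s, t; unfold zsign; Z.div_mod_to_equations; lia.
    + destruct s, t; unfold zsign; Z.div_mod_to_equations; lia.
  - intros x. pose proof (H j). pose proof (H k).
    destruct (Hval x) as [-> | [-> | ->]]; auto;
      destruct s, t; unfold zsign; Z.div_mod_to_equations; lia.
Qed.

End Lattices.

Section OrbitInvariant.
Context {J : Type} (X : lsys).

(* Every mu in the orbit of lambda has coordinates
   nu + lambda(c) w, where nu satisfies the minimality condition (nu is in fact
   a signed permutation of the coordinates of lambda, but only the condition is
   needed), w is a lattice vector supported on a finite list S, and lambda(d)
   has moved by kappa/(2 lambda(c)) * excess. *)
Record orbit_data (l mu : weight J) (S : list J) (nu : J -> R) (w : J -> Z) : Prop := {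
  od_lc : lc mu = lc l;
  od_nodup : NoDup S;
  od_support : forall x, ~ In x S -> w x = 0%Z;
  od_coord : forall x, lt mu x = nu x + lc l * IZR (w x);
  od_cond : cond X (lc l) nu;
  od_lattice : translation_lattice X S w;
  od_ld : ld mu - ld l = kappa X / (2 * lc l) * excess (lc l) nu w S }.

Lemma orbit_data_init (l : weight J) :
  minimality_cond X l -> orbit_data l l nil (lt l) (fun _ => 0%Z).
Proof.
  intros Hm. split.
  - reflexivity.
  - constructor.
  - reflexivity.
  - intros x. simpl. ring.
  - destruct l, X; exact Hm.
  - destruct X; simpl; auto.
  - unfold excess; simpl. ring.
Qed.

Lemma orbit_data_extend l mu S nu w y :
  orbit_data l mu S nu w -> exists S', orbit_data l mu S' nu w /\ In y S' /\ incl S S'.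
Proof.
  intros D. destruct (excluded_middle_informative (In y S)) as [Hy|Hy].
  - exists S. split; [exact D | split; [exact Hy | apply incl_refl]].
  - exists (y :: S). split; [|split; [left; reflexivity | apply incl_tl, incl_refl]].
    destruct D as [Dlc DND Dsupp Dcoord Dcond Dlat Dld].
    assert (Hwy : w y = 0%Z) by auto.
    split; auto.
    + constructor; auto.
    + intros x Hx. apply Dsupp. intros Hx'. apply Hx. right. exact Hx'.
    + destruct X; simpl in *; rewrite ?Hwy; auto.
    + unfold excess in *. cbn [lsum]. rewrite Dld, Hwy. simpl. ring.
Qed.

Lemma orbit_data_transfer l mu mu' S nu w nu' w' :
  orbit_data l mu S nu w -> lc mu' = lc mu ->
  (forall x, ~ In x S -> w' x = 0%Z) ->
  (forall x, lt mu' x = nu' x + lc l * IZR (w' x)) ->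
  cond X (lc l) nu' -> translation_lattice X S w' ->
  lsum (fun x => nu' x ^ 2 - nu x ^ 2) S = 0 ->
  ld mu' - ld mu = kappa X / (2 * lc l) * lsum (fun x => lt mu' x ^ 2 - lt mu x ^ 2) S ->
  orbit_data l mu' S nu' w'.
Proof.
  intros [Dlc DND Dsupp Dcoord Dcond Dlat Dld] Hlc Hsupp Hcoord Hcond Hlat Hnu Hld.
  assert (E : excess (lc l) nu' w' S =
              excess (lc l) nu w S + lsum (fun x => lt mu' x ^ 2 - lt mu x ^ 2) S
              - lsum (fun x => nu' x ^ 2 - nu x ^ 2) S).
  { unfold excess. rewrite <- lsum_plus, <- lsum_minus. apply lsum_ext. intros x _.
    rewrite Hcoord, Dcoord. ring. }
  split; auto.
  - congruence.
  - rewrite E, Hnu. replace (ld mu' - ld l) with ((ld mu' - ld mu) + (ld mu - ld l)) by ring.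
    rewrite Hld, Dld. ring.
Qed.

Lemma orbit_data_one_point l mu mu' S nu w j q :
  orbit_data l mu S nu w -> In j S -> one_point_move X mu mu' j q -> admissible_shift X q ->
  orbit_data l mu' S (upd nu j (- nu j)) (upd w j (- w j + q)%Z).
Proof.
  intros D Hj [Hlc [Hoff [Hmj Hld]]] Hq.
  pose proof D as [Dlc DND Dsupp Dcoord Dcond Dlat Dld].
  apply (orbit_data_transfer l mu mu' S nu w); auto.
  - intros x Hx. rewrite upd_other by (intros ->; contradiction). auto.
  - intros x. destruct (excluded_middle_informative (x = j)) as [->|nj].
    + rewrite Hmj, !upd_same, Dcoord, Dlc, plus_IZR, opp_IZR. ring.
    + rewrite Hoff, !upd_other by exact nj. auto.
  - apply cond_one_point; [apply Hq | exact Dcond].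
  - apply lattice_one_point; auto.
  - apply lsum_zero. intros x _. unfold upd.
    destruct (excluded_middle_informative (x = j)) as [->|]; ring.
  - rewrite (lsum_single _ S j DND Hj), <- Dlc; [exact Hld|].
    intros x nj. rewrite Hoff by exact nj. ring.
Qed.

Lemma orbit_data_two_point l mu S nu w j k s t n : 0 < lc l ->
  orbit_data l mu S nu w -> In j S -> In k S -> is_root X (Pair j k s t) n ->
  orbit_data l (reflect X (Pair j k s t) n mu) S
    (signed_swap nu j k (IZR (zsign s * zsign t)))
    (swap_shift w j k (zsign s * zsign t) (zsign s * (kappa_inv X * n)) (zsign t * (kappa_inv X * n))).
Proof.
  intros Hc D Hj Hk Hr. pose proof D as [Dlc DND Dsupp Dcoord Dcond Dlat Dld].
  assert (jk : j <> k) by apply Hr. assert (kj : k <> j) by auto.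
  rewrite <- Dlc in Hc.
  destruct (reflect_pair_move X mu j k s t n jk Hc) as [Hlc [Hoff [Hmj [Hmk Hld]]]].
  set (p := IZR (zsign s * zsign t)) in *.
  assert (Hp : p * p = 1) by (unfold p; destruct s, t; simpl; lra).
  apply (orbit_data_transfer l mu _ S nu w); unfold signed_swap, swap_shift; auto.
  - intros x Hx. rewrite !upd_other by (intros ->; contradiction). auto.
  - intros x. destruct (excluded_middle_informative (x = j)) as [->|nj];
      [|destruct (excluded_middle_informative (x = k)) as [->|nk]].
    + rewrite Hmj, upd_other, upd_same, upd_other, upd_same, Dcoord, Dlc by exact jk.
      rewrite plus_IZR, !mult_IZR, opp_IZR. unfold p. rewrite mult_IZR. ring.
    + rewrite Hmk, !upd_same, Dcoord, Dlc.
      rewrite plus_IZR, !mult_IZR, opp_IZR. unfold p. rewrite mult_IZR. ring.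
    + rewrite Hoff, !upd_other by auto. auto.
  - apply cond_two_point with n; auto.
  - apply lattice_two_point; auto.
  - rewrite (lsum_pair _ S j k DND Hj Hk jk).
    + rewrite upd_other, !upd_same by exact jk. nra.
    + intros x nj nk. rewrite !upd_other by auto. ring.
  - rewrite (lsum_pair _ S j k DND Hj Hk jk), <- Dlc; [exact Hld|].
    intros x nj nk. rewrite Hoff by auto. ring.
Qed.

Lemma orbit_data_reflect l mu mu' : 0 < lc l ->
  (exists S nu w, orbit_data l mu S nu w) -> refl_step X mu mu' ->
  exists S nu w, orbit_data l mu' S nu w.
Proof.
  intros Hc [S [nu [w D]]] [a [n [Hr ->]]].
  assert (Hcm : 0 < lc mu) by (rewrite (od_lc _ _ _ _ _ D); exact Hc).
  destruct a as [j k s t | j s | j s].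
  - destruct (orbit_data_extend _ _ _ _ _ j D) as [S1 [D1 [Hj1 _]]].
    destruct (orbit_data_extend _ _ _ _ _ k D1) as [S2 [D2 [Hk2 Hincl]]].
    eexists S2, _, _. exact (orbit_data_two_point l mu S2 nu w j k s t n Hc D2 (Hincl j Hj1) Hk2 Hr).
  - destruct (orbit_data_extend _ _ _ _ _ j D) as [S1 [D1 [Hj1 _]]].
    eexists S1, _, _.
    exact (orbit_data_one_point l mu _ S1 nu w j _ D1 Hj1
             (reflect_sing_move X mu j s n Hcm) (sing_shift_admissible X j s n Hr)).
  - destruct (orbit_data_extend _ _ _ _ _ j D) as [S1 [D1 [Hj1 _]]].
    eexists S1, _, _.
    exact (orbit_data_one_point l mu _ S1 nu w j _ D1 Hj1
             (reflect_doub_move X mu j s n Hcm) (doub_shift_admissible X j s n Hr)).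
Qed.

Lemma orbit_data_of_orbit l mu : 0 < lc l -> minimality_cond X l -> in_orbit X l mu ->
  exists S nu w, orbit_data l mu S nu w.
Proof.
  intros Hc Hm H. apply clos_rt_rtn1 in H.
  induction H as [|mu mu' Hstep _ IH].
  - exists nil, (lt l), (fun _ => 0%Z). apply orbit_data_init, Hm.
  - apply orbit_data_reflect with mu; auto.
Qed.

Lemma orbit_data_ld_ge (HJ : infinite_type J) l mu S nu w : 0 < lc l ->
  orbit_data l mu S nu w -> ld l <= ld mu.
Proof.
  intros Hc [_ ND _ _ Hcond Hlat Hld].
  pose proof (excess_nonneg HJ X (lc l) nu w S Hc ND Hcond Hlat) as Hex.
  assert (0 <= kappa X / (2 * lc l)).
  { unfold Rdiv. apply Rmult_le_pos; [destruct X; simpl; lra|].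
    left. apply Rinv_0_lt_compat. lra. }
  assert (0 <= kappa X / (2 * lc l) * excess (lc l) nu w S) by (apply Rmult_le_pos; auto).
  lra.
Qed.

End OrbitInvariant.

Lemma sufficiency {J : Type} (HJ : infinite_type J) X (l : weight J) :
  0 < lc l -> minimality_cond X l -> d_minimal X l.
Proof.
  intros Hc Hm mu Ho.
  destruct (orbit_data_of_orbit X l mu Hc Hm Ho) as [S [nu [w D]]].
  exact (orbit_data_ld_ge X HJ l mu S nu w Hc D).
Qed.

(* Necessity: a d-minimal weight is not moved down by the reflection in any
   root (alpha, 1), i.e. lambda evaluates nonpositively on its coroot; choosing
   alpha with the signs of the coordinates of lambda gives the condition. *)
Lemma d_minimal_coroot_nonpos {J : Type} X (l : weight J) a :
  d_minimal X l -> is_root X a 1 -> lam_coroot X a 1 l <= 0.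
Proof.
  intros H Hr.
  assert (Ho : in_orbit X l (reflect X a 1 l)) by (apply rt_step; exists a, 1%Z; auto).
  specialize (H _ Ho). simpl in H. lra.
Qed.

Definition sign_of (x : R) : bool := if Rle_dec 0 x then true else false.

Lemma sgn_sign_of x : sgn (sign_of x) * x = Rabs x.
Proof. unfold sign_of, sgn, Rabs. destruct (Rle_dec 0 x), (Rcase_abs x); lra. Qed.

Lemma odd_one : Z.Odd 1.
Proof. exists 0%Z. reflexivity. Qed.

Lemma necessity {J : Type} X (l : weight J) :
  0 < lc l -> d_minimal X l -> minimality_cond X l.
Proof.
  intros Hc H. destruct X; simpl.
  - intros j k. destruct (excluded_middle_informative (j = k)) as [->|jk]; [lra|].
    assert (Hr : is_root A1 (Pair j k true false) 1) by (split; simpl; auto; congruence).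
    pose proof (d_minimal_coroot_nonpos _ _ _ H Hr) as h.
    unfold lam_coroot, lam_check, norm2, sgn in h; simpl in h. lra.
  - intros j k jk.
    assert (Hr : is_root B1 (Pair j k (sign_of (lt l j)) (sign_of (lt l k))) 1) by (split; simpl; auto).
    pose proof (d_minimal_coroot_nonpos _ _ _ H Hr) as h.
    unfold lam_coroot, lam_check, norm2 in h. rewrite !sgn_sign_of in h. simpl in h. lra.
  - intros j.
    assert (Hr : is_root C1 (Doub j (sign_of (lt l j))) 1) by (split; simpl; auto).
    pose proof (d_minimal_coroot_nonpos _ _ _ H Hr) as h.
    unfold lam_coroot, lam_check, norm2 in h. rewrite !sgn_sign_of in h. simpl in h. lra.
  - intros j k jk.
    assert (Hr : is_root D1 (Pair j k (sign_of (lt l j)) (sign_of (lt l k))) 1) by (split; simpl; auto).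
    pose proof (d_minimal_coroot_nonpos _ _ _ H Hr) as h.
    unfold lam_coroot, lam_check, norm2 in h. rewrite !sgn_sign_of in h. simpl in h. lra.
  - intros j.
    assert (Hr : is_root B2 (Sing j (sign_of (lt l j))) 1)
      by (split; simpl; auto; right; split; [apply odd_one | exact I]).
    pose proof (d_minimal_coroot_nonpos _ _ _ H Hr) as h.
    unfold lam_coroot, lam_check, norm2 in h. rewrite Rmult_assoc, !sgn_sign_of in h. simpl in h. lra.
  - intros j k jk.
    assert (Hr : is_root C2 (Pair j k (sign_of (lt l j)) (sign_of (lt l k))) 1)
      by (split; simpl; auto; right; split; [apply odd_one | exact I]).
    pose proof (d_minimal_coroot_nonpos _ _ _ H Hr) as h.
    unfold lam_coroot, lam_check, norm2 in h. rewrite !sgn_sign_of in h. simpl in h. lra.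
  - intros j.
    assert (Hr : is_root BC2 (Doub j (sign_of (lt l j))) 1)
      by (split; simpl; auto; right; split; [apply odd_one | exact I]).
    pose proof (d_minimal_coroot_nonpos _ _ _ H Hr) as h.
    unfold lam_coroot, lam_check, norm2 in h. rewrite !sgn_sign_of in h. simpl in h. lra.
Qed.

Theorem theorem4p4 (J : Type) (HJ : infinite_type J) (X : lsys) (l : weight J)
  (Hc : 0 < lc l) :
  d_minimal X l <-> minimality_cond X l.
Proof.
  split; [apply necessity, Hc | apply sufficiency; auto].
Qed.
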